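(* Let $k_0\in\mathbb{R}\setminus\{0\}$ and let $z\in C^2([-1,1])$ be a complex-valued function with $z(x)\neq 0$ for all $x\in[-1,1]$ and satisfying the boundary conditions $$z'(1)-ik_0 z(1)=0,\qquad z'(-1)+ik_0 z(-1)=0 .$$ Define the complex potential $U:\mathbb{R}\to\mathbb{C}$ by $$U(x)=\frac{z''(x)+k_0^2 z(x)}{z(x)}\quad (|x|<1),\qquad U(x)=0\quad (|x|\ge 1).$$ Then the function $$\psi(x)=\begin{cases} z(x), & |x|\le 1,\\ z(\pm 1)\,e^{ik_0(|x|-1)}, & \pm x\ge 1,\end{cases}$$ is a nontrivial $C^1(\mathbb{R})$ solution of $-\psi''+U(x)\psi=k_0^2\psi$ on $|x|<1$ with $\psi(x)=\alpha_\pm e^{ik_0|x|}$ for $\pm x\ge 1$ (for constants $\alpha_\pm\in\mathbb{C}$). Consequently $M_{22}(k_0)=0$, i.e. $U$ has a spectral singularity at $k=k_0$.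
   Context: For a potential $U$ vanishing outside $[-1,1]$ and $k\in\mathbb{R}\setminus\{0\}$, consider solutions $\psi$ of $-\psi''+U(x)\psi=k^2\psi$ on $|x|<1$ (continuous with continuous derivative on $\mathbb{R}$) of the form $\psi=a_\pm e^{ikx}+b_\pm e^{-ikx}$ for $\pm x\ge 1$. The transfer matrix $M(k)=(M_{ij}(k))_{i,j=1,2}$ is the $2\times 2$ matrix defined by $(a_+,b_+)^T=M(k)(a_-,b_-)^T$. A real $k_0\neq 0$ with $M_{22}(k_0)=0$ is called a spectral singularity (it corresponds to lasing if $k_0>0$ and to coherent perfect absorption if $k_0<0$); equivalently, the problem $-\psi''+U\psi=k_0^2\psi$ on $|x|<1$, $\psi=\alpha_\pm e^{ik_0|x|}$ for $\pm x\ge 1$, has a nontrivial solution. *)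

From Stdlib Require Import Reals.
From Coquelicot Require Import Coquelicot.
Open Scope R_scope.

(* Complex numbers (Coquelicot) ; [Complex.C] to avoid the clash with binomials. *)
Notation CC := Complex.C.

Definition eix (t : R) : CC := (cos t, sin t).

Definition I11 (x : R) : Prop := -1 <= x <= 1.

Definition deriv_on_I11 (f f' : R -> CC) : Prop :=
  forall x, I11 x ->
    filterlim (fun y => Cdiv (Cminus (f y) (f x)) (RtoC (y - x)))
      (within (fun y => I11 y /\ y <> x) (locally x)) (locally (f' x)).

Definition C2_on_I11 (z z1 z2 : R -> CC) : Prop :=
  deriv_on_I11 z z1 /\ deriv_on_I11 z1 z2 /\
  (forall x, I11 x -> filterlim z2 (within I11 (locally x)) (locally (z2 x))).

Definition potU (k0 : R) (z z2 : R -> CC) (x : R) : CC :=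
  if Rlt_dec (Rabs x) 1 then Cdiv (Cplus (z2 x) (Cmult (RtoC (k0 ^ 2)) (z x))) (z x)
  else RtoC 0.

Definition psi_ext (k0 : R) (z : R -> CC) (x : R) : CC :=
  if Rle_dec (Rabs x) 1 then z x
  else if Rle_dec 0 x then Cmult (z 1) (eix (k0 * (Rabs x - 1)))
  else Cmult (z (-1)) (eix (k0 * (Rabs x - 1))).

Definition C1_ode_sol (U : R -> CC) (k : R) (psi : R -> CC) : Prop :=
  exists psi' : R -> CC,
    (forall x, is_derive psi x (psi' x)) /\
    (forall x, continuous psi' x) /\
    (forall x, Rabs x < 1 ->
       exists psi'' : CC, is_derive psi' x psi'' /\
         Cplus (Copp psi'') (Cmult (U x) (psi x)) = Cmult (RtoC (k ^ 2)) (psi x)).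

Definition scat_sol (U : R -> CC) (k : R) (psi : R -> CC) (am bm ap bp : CC) : Prop :=
  C1_ode_sol U k psi /\
  (forall x, 1 <= x -> psi x = Cplus (Cmult ap (eix (k * x))) (Cmult bp (eix (- (k * x))))) /\
  (forall x, x <= -1 -> psi x = Cplus (Cmult am (eix (k * x))) (Cmult bm (eix (- (k * x))))).

Record mat2 := Mat2 { M11 : CC; M12 : CC; M21 : CC; M22 : CC }.

Definition is_transfer_matrix (U : R -> CC) (k : R) (M : mat2) : Prop :=
  (forall psi am bm ap bp, scat_sol U k psi am bm ap bp ->
     ap = Cplus (Cmult (M11 M) am) (Cmult (M12 M) bm) /\
     bp = Cplus (Cmult (M21 M) am) (Cmult (M22 M) bm)) /\
  (forall am bm, exists psi ap bp, scat_sol U k psi am bm ap bp).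

From Stdlib Require Import Reals Lra Classical.
From Coquelicot Require Import Coquelicot.
Open Scope R_scope.

(* The boundary conditions say that the one-sided
   derivatives z'(+-1) = +-i k0 z(+-1) agree with those of the waves, so psi is C^1
   with derivative the same gluing of z'; on |x| < 1 the equation is the definition
   of U.  Junctions are handled by gluing one-sided limits over the closed pieces
   (-oo,-1], [-1,1], [1,oo): at a point off a closed piece the limit restricted to
   that piece holds vacuously.  Finally psi is a scattering solution with
   a_- = b_+ = 0 and b_- = z(-1) e^{-i k0} <> 0, so b_+ = M22 b_- forces M22 = 0. *)

Lemma filterlim_within_or {T U : Type} {F : (T -> Prop) -> Prop} {FF : Filter F}
  (S1 S2 : T -> Prop) (g : T -> U) (G : (U -> Prop) -> Prop) :
  filterlim g (within S1 F) G -> filterlim g (within S2 F) G ->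
  filterlim g (within (fun y => S1 y \/ S2 y) F) G.
Proof.
  intros H1 H2 P HP. specialize (H1 P HP). specialize (H2 P HP).
  unfold filtermap, within in *. apply filter_imp with (2 := filter_and _ _ H1 H2).
  intros y [Hy1 Hy2] [Sy | Sy]; auto.
Qed.

Lemma filterlim_within_eventually_not {T U : Type} {F : (T -> Prop) -> Prop} {FF : Filter F}
  (S : T -> Prop) (g : T -> U) (G : (U -> Prop) -> Prop) :
  F (fun y => ~ S y) -> filterlim g (within S F) G.
Proof.
  intros HS P _. apply filter_imp with (2 := HS). intros y Hy Sy. contradiction.
Qed.

Lemma closed_locally_not {T : UniformSpace} (S : T -> Prop) (x : T) :
  closed S -> ~ S x -> locally x (fun y => ~ S y).
Proof.
  intros HS Hx. apply NNPP. intros H. exact (Hx (HS x H)).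
Qed.

Lemma filterlim_within_closed {T : UniformSpace} {U : Type}
  {F : (T -> Prop) -> Prop} {FF : Filter F} (x : T) (S : T -> Prop) (g : T -> U)
  (G : (U -> Prop) -> Prop) :
  filter_le F (locally x) -> closed S ->
  (S x -> filterlim g (within S F) G) -> filterlim g (within S F) G.
Proof.
  intros HF HS Hx. destruct (classic (S x)) as [Sx | Sx]; auto.
  apply filterlim_within_eventually_not, HF, closed_locally_not; assumption.
Qed.

Lemma closed_I11 : closed I11.
Proof. apply closed_and; [apply closed_ge | apply closed_le]. Qed.

Lemma filterlim_three_pieces {U : Type} {F : (R -> Prop) -> Prop} {FF : Filter F}
  (x : R) (g : R -> U) (G : (U -> Prop) -> Prop) :
  filter_le F (locally x) ->
  (x <= -1 -> filterlim g (within (fun y => y <= -1) F) G) ->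
  (I11 x -> filterlim g (within I11 F) G) ->
  (1 <= x -> filterlim g (within (fun y => 1 <= y) F) G) ->
  filterlim g F G.
Proof.
  intros HF Hl Hm Hr.
  assert (H : filterlim g (within (fun y => y <= -1 \/ I11 y \/ 1 <= y) F) G).
  { apply filterlim_within_or; [| apply filterlim_within_or];
      apply filterlim_within_closed with x;
      auto using closed_le, closed_ge, closed_I11. }
  intros P HP. specialize (H P HP). unfold filtermap, within in *.
  apply filter_imp with (2 := H). intros y Hy. apply Hy. unfold I11. lra.
Qed.

Definition dquot (f : R -> CC) (x y : R) : CC := Cdiv (Cminus (f y) (f x)) (RtoC (y - x)).

Lemma RtoC_neq_0 (r : R) : r <> 0 -> RtoC r <> RtoC 0.
Proof. intros Hr H. apply Hr. now injection H. Qed.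

Lemma dquot_mul (f : R -> CC) (x y : R) : y <> x ->
  Cmult (RtoC (y - x)) (dquot f x y) = Cminus (f y) (f x).
Proof.
  intros Hyx. unfold dquot. field. apply RtoC_neq_0. lra.
Qed.

Lemma dquot_factor (f : R -> CC) (x y : R) (l : CC) : y <> x ->
  Cminus (Cminus (f y) (f x)) (Cmult (RtoC (y - x)) l)
  = Cmult (RtoC (y - x)) (Cminus (dquot f x y) l).
Proof.
  intros Hyx. rewrite <- (dquot_mul f x y Hyx). ring.
Qed.

Lemma is_derive_dquot (f : R -> CC) (x : R) (l : CC) :
  is_derive f x l <-> filterlim (dquot f x) (locally' x) (locally l).
Proof.
  split.
  - intros [_ Hd].
    apply (proj2 (filterlim_locally_ball_norm (K := R_AbsRing) (U := C_R_NormedModule) _ _)).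
    intros eps. assert (He : 0 < eps / 2) by (generalize (cond_pos eps); lra).
    specialize (Hd x (fun P HP => HP) (mkposreal _ He)).
    apply filter_imp with (2 := Hd). intros y Hy Hyx.
    rewrite <- Cmod_norm, scal_R_Cmult in Hy.
    change (Cmod (Cminus (Cminus (f y) (f x)) (Cmult (RtoC (y - x)) l))
            <= eps / 2 * Rabs (y - x)) in Hy.
    rewrite dquot_factor, Cmod_mult, Cmod_R in Hy by exact Hyx.
    unfold ball_norm. rewrite <- Cmod_norm. change (Cmod (Cminus (dquot f x y) l) < eps).
    assert (0 < Rabs (y - x)) by (apply Rabs_pos_lt; lra). nra.
  - intros H. split; [apply is_linear_scal_l |].
    intros x0 Hx0.
    apply (is_filter_lim_locally_unique (K := R_AbsRing) (V := R_NormedModule)) in Hx0.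
    subst x0.
    intros eps.
    assert (Hq := proj1 (filterlim_locally_ball_norm (K := R_AbsRing)
                           (U := C_R_NormedModule) _ _) H eps).
    unfold locally', within in Hq. apply filter_imp with (2 := Hq).
    intros y Hy. rewrite <- Cmod_norm, scal_R_Cmult.
    change (Cmod (Cminus (Cminus (f y) (f x)) (Cmult (RtoC (y - x)) l))
            <= eps * Rabs (y - x)).
    destruct (Req_dec y x) as [-> | Hyx].
    + rewrite Rminus_diag, Rabs_R0, Rmult_0_r.
      replace (Cminus (Cminus (f x) (f x)) (Cmult (RtoC 0) l)) with (RtoC 0) by ring.
      rewrite Cmod_0. apply Rle_refl.
    + specialize (Hy Hyx). unfold ball_norm in Hy. rewrite <- Cmod_norm in Hy.
      change (Cmod (Cminus (dquot f x y) l) < eps) in Hy.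
      rewrite dquot_factor, Cmod_mult, Cmod_R by exact Hyx.
      pose proof (Rabs_pos (y - x)). nra.
Qed.

Definition is_derive_within (S : R -> Prop) (f : R -> CC) (x : R) (l : CC) : Prop :=
  filterlim (dquot f x) (within S (locally' x)) (locally l).

Lemma deriv_on_I11_within (f f' : R -> CC) (x : R) :
  deriv_on_I11 f f' -> I11 x -> is_derive_within I11 f x (f' x).
Proof.
  intros Hf Hx P HP. specialize (Hf x Hx P HP).
  unfold filtermap, locally', within in *. apply filter_imp with (2 := Hf). tauto.
Qed.

Lemma is_derive_within_of_is_derive (S : R -> Prop) (f : R -> CC) (x : R) (l : CC) :
  is_derive f x l -> is_derive_within S f x l.
Proof.
  intros Hf%is_derive_dquot P HP. specialize (Hf P HP).
  unfold filtermap, locally', within in *. apply filter_imp with (2 := Hf). auto.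
Qed.

Lemma is_derive_within_ext (S : R -> Prop) (f g : R -> CC) (x : R) (l : CC) :
  (forall y, S y -> f y = g y) -> S x ->
  is_derive_within S f x l -> is_derive_within S g x l.
Proof.
  intros Hfg Sx. apply filterlim_within_ext.
  intros y Sy. unfold dquot. rewrite !Hfg by assumption. reflexivity.
Qed.

Lemma is_derive_within_continuous (S : R -> Prop) (f : R -> CC) (x : R) (l : CC) :
  is_derive_within S f x l -> filterlim f (within S (locally x)) (locally (f x)).
Proof.
  intros Hf.
  apply (proj2 (filterlim_locally_ball_norm (K := R_AbsRing) (U := C_R_NormedModule) _ _)).
  intros eps.
  assert (Hq := proj1 (filterlim_locally_ball_norm (K := R_AbsRing) (U := C_R_NormedModule) _ _)
                  Hf (mkposreal _ Rlt_0_1)).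
  assert (Hl : 0 < Cmod l + 1) by (pose proof (Cmod_ge_0 l); lra).
  assert (Hd : 0 < eps / (Cmod l + 1)) by (apply Rdiv_lt_0_compat; [apply cond_pos | exact Hl]).
  assert (Hb := locally_ball x (mkposreal _ Hd)).
  unfold locally', within in *.
  apply filter_imp with (2 := filter_and _ _ Hq Hb). intros y [Hy Hyb] Sy.
  unfold ball_norm. rewrite <- Cmod_norm. change (Cmod (Cminus (f y) (f x)) < eps).
  destruct (Req_dec y x) as [-> | Hyx].
  { replace (Cminus (f x) (f x)) with (RtoC 0) by ring. rewrite Cmod_0. apply cond_pos. }
  specialize (Hy Hyx Sy). unfold ball_norm in Hy. rewrite <- Cmod_norm in Hy.
  change (Cmod (Cminus (dquot f x y) l) < 1) in Hy.
  change (Rabs (y - x) < eps / (Cmod l + 1)) in Hyb.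
  assert (Hdq : Cmod (dquot f x y) < Cmod l + 1).
  { replace (dquot f x y) with (Cplus l (Cminus (dquot f x y) l)) by ring.
    pose proof (Cmod_triangle l (Cminus (dquot f x y) l)). lra. }
  rewrite <- (dquot_mul f x y Hyx), Cmod_mult, Cmod_R.
  apply Rle_lt_trans with (Rabs (y - x) * (Cmod l + 1)).
  - apply Rmult_le_compat_l; [apply Rabs_pos | lra].
  - apply Rmult_lt_reg_r with (/ (Cmod l + 1)); [apply Rinv_0_lt_compat; lra |].
    rewrite Rmult_assoc, Rinv_r by lra. lra.
Qed.

Lemma locally_I11 (x : R) : Rabs x < 1 -> locally x I11.
Proof.
  intros Hx. apply filter_imp with (fun y => -1 < y /\ y < 1).
  - unfold I11. intros y Hy. lra.
  - apply open_and; [apply open_gt | apply open_lt |]. apply Rabs_def2 in Hx. lra.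
Qed.

Lemma is_derive_of_within_locally (S : R -> Prop) (f : R -> CC) (x : R) (l : CC) :
  locally x S -> is_derive_within S f x l -> is_derive f x l.
Proof.
  intros HS Hf. apply is_derive_dquot. intros P HP. specialize (Hf P HP).
  unfold filtermap, locally', within in *.
  apply filter_imp with (2 := filter_and _ _ HS Hf). tauto.
Qed.

Lemma eix_add (s t : R) : eix (s + t) = Cmult (eix s) (eix t).
Proof. unfold eix, Cmult; simpl. rewrite cos_plus, sin_plus. f_equal; ring. Qed.

Lemma eix_0 : eix 0 = RtoC 1.
Proof. unfold eix. rewrite cos_0, sin_0. reflexivity. Qed.

Lemma eix_neq_0 (t : R) : eix t <> RtoC 0.
Proof.
  intros H. injection H as Hc Hs. pose proof (sin2_cos2 t) as E.
  rewrite Hc, Hs in E. unfold Rsqr in E. lra.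
Qed.

Definition wave (c : CC) (k a x : R) : CC := Cmult c (eix (k * (x - a))).

Lemma wave_at (c : CC) (k a : R) : wave c k a a = c.
Proof. unfold wave. rewrite Rminus_diag, Rmult_0_r, eix_0. apply Cmult_1_r. Qed.

Lemma wave_scale (w c : CC) (k a x : R) : Cmult w (wave c k a x) = wave (Cmult w c) k a x.
Proof. unfold wave. ring. Qed.

Lemma wave_plane (c : CC) (k a x : R) :
  wave c k a x = Cmult (Cmult c (eix (- (k * a)))) (eix (k * x)).
Proof.
  unfold wave. rewrite <- Cmult_assoc, <- eix_add. do 2 f_equal. ring.
Qed.

Lemma is_derive_wave (c : CC) (k a x : R) :
  is_derive (wave c k a) x (Cmult (Cmult Ci (RtoC k)) (wave c k a x)).
Proof.
  assert (Hcos : is_derive (fun t => cos (k * (t - a))) x (- (k * sin (k * (x - a))))).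
  { auto_derive; [exact I | unfold Rminus; ring]. }
  assert (Hsin : is_derive (fun t => sin (k * (t - a))) x (k * cos (k * (x - a)))).
  { auto_derive; [exact I | unfold Rminus; ring]. }
  (* c e^{i t} = cos t * c + sin t * (i c): a real combination of two fixed vectors. *)
  assert (H := is_derive_plus _ _ _ _ _
                 (is_derive_scal_l (V := C_R_NormedModule) _ _ _ c Hcos)
                 (is_derive_scal_l (V := C_R_NormedModule) _ _ _ (Cmult Ci c) Hsin)).
  replace (Cmult (Cmult Ci (RtoC k)) (wave c k a x)) with
    (plus (scal (- (k * sin (k * (x - a)))) c) (scal (k * cos (k * (x - a))) (Cmult Ci c)));
    [apply is_derive_ext with (2 := H); intros t |];
    destruct c as [c1 c2]; unfold wave, eix, Ci, Cmult, RtoC; cbv [scal plus]; simpl;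
    unfold prod_plus, prod_scal; simpl; f_equal; cbn; ring.
Qed.

Lemma psi_ext_I11 (k : R) (f : R -> CC) (x : R) : I11 x -> psi_ext k f x = f x.
Proof.
  intros Hx. unfold psi_ext. destruct (Rle_dec (Rabs x) 1) as [_ | Hn]; [reflexivity |].
  exfalso. apply Hn, Rabs_le. unfold I11 in Hx. lra.
Qed.

Lemma psi_ext_right (k : R) (f : R -> CC) (x : R) : 1 <= x -> psi_ext k f x = wave (f 1) k 1 x.
Proof.
  intros Hx. unfold psi_ext. rewrite Rabs_pos_eq by lra.
  destruct (Rle_dec x 1) as [Hx1 | _].
  - replace x with 1 by lra. symmetry. apply wave_at.
  - destruct (Rle_dec 0 x) as [_ | Hn]; [reflexivity | lra].
Qed.

Lemma psi_ext_left (k : R) (f : R -> CC) (x : R) :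
  x <= -1 -> psi_ext k f x = wave (f (-1)) (- k) (-1) x.
Proof.
  intros Hx. unfold psi_ext. rewrite Rabs_left1 by lra.
  destruct (Rle_dec (- x) 1) as [Hx1 | _].
  - replace x with (-1) by lra. symmetry. apply wave_at.
  - destruct (Rle_dec 0 x) as [Hn | _]; [lra |].
    unfold wave. do 2 f_equal. ring.
Qed.

Lemma psi_ext_outgoing_right (k : R) (f : R -> CC) (x : R) :
  1 <= x -> psi_ext k f x = Cmult (Cmult (f 1) (eix (- k))) (eix (k * x)).
Proof. intros Hx. rewrite psi_ext_right, wave_plane, Rmult_1_r by exact Hx. reflexivity. Qed.

Lemma psi_ext_outgoing_left (k : R) (f : R -> CC) (x : R) :
  x <= -1 -> psi_ext k f x = Cmult (Cmult (f (-1)) (eix (- k))) (eix (- (k * x))).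
Proof. intros Hx. rewrite psi_ext_left, wave_plane by exact Hx. do 4 f_equal; ring. Qed.

Lemma psi_ext_is_derive (k : R) (f f' : R -> CC) :
  deriv_on_I11 f f' ->
  f' 1 = Cmult (Cmult Ci (RtoC k)) (f 1) ->
  f' (-1) = Cmult (Cmult Ci (RtoC (- k))) (f (-1)) ->
  forall x, is_derive (psi_ext k f) x (psi_ext k f' x).
Proof.
  intros Hf H1 H2 x. apply is_derive_dquot, filterlim_three_pieces with x.
  - intros P HP. apply filter_imp with (2 := HP). auto.
  - intros Hx. apply is_derive_within_ext with (wave (f (-1)) (- k) (-1)); [| exact Hx |].
    + intros y Hy. symmetry. apply psi_ext_left, Hy.
    + rewrite psi_ext_left, H2, <- wave_scale by exact Hx.
      apply is_derive_within_of_is_derive, is_derive_wave.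
  - intros Hx. apply is_derive_within_ext with f; [| exact Hx |].
    + intros y Hy. symmetry. apply psi_ext_I11, Hy.
    + rewrite psi_ext_I11 by exact Hx. apply deriv_on_I11_within; assumption.
  - intros Hx. apply is_derive_within_ext with (wave (f 1) k 1); [| exact Hx |].
    + intros y Hy. symmetry. apply psi_ext_right, Hy.
    + rewrite psi_ext_right, H1, <- wave_scale by exact Hx.
      apply is_derive_within_of_is_derive, is_derive_wave.
Qed.

Lemma psi_ext_continuous (k : R) (f : R -> CC) :
  (forall x, I11 x -> filterlim f (within I11 (locally x)) (locally (f x))) ->
  forall x, continuous (psi_ext k f) x.
Proof.
  intros Hf x. apply filterlim_three_pieces with x; [intros P HP; exact HP | ..].
  - intros Hx. rewrite psi_ext_left by exact Hx.
    apply filterlim_within_ext with (wave (f (-1)) (- k) (-1)).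
    + intros y Hy. symmetry. apply psi_ext_left, Hy.
    + apply (filterlim_filter_le_1 _ (filter_le_within _)).
      apply (ex_derive_continuous (V := C_R_NormedModule)). eexists. apply is_derive_wave.
  - intros Hx. rewrite psi_ext_I11 by exact Hx. apply filterlim_within_ext with f; auto.
    intros y Hy. symmetry. apply psi_ext_I11, Hy.
  - intros Hx. rewrite psi_ext_right by exact Hx.
    apply filterlim_within_ext with (wave (f 1) k 1).
    + intros y Hy. symmetry. apply psi_ext_right, Hy.
    + apply (filterlim_filter_le_1 _ (filter_le_within _)).
      apply (ex_derive_continuous (V := C_R_NormedModule)). eexists. apply is_derive_wave.
Qed.

Lemma psi_ext_is_derive_interior (k : R) (f f' : R -> CC) (x : R) :
  deriv_on_I11 f f' -> Rabs x < 1 -> is_derive (psi_ext k f) x (f' x).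
Proof.
  intros Hf Hx. assert (HxI : I11 x) by (apply Rabs_def2 in Hx; unfold I11; lra).
  apply is_derive_of_within_locally with I11; [apply locally_I11, Hx |].
  apply is_derive_within_ext with f; [| exact HxI | apply deriv_on_I11_within; assumption].
  intros y Hy. symmetry. apply psi_ext_I11, Hy.
Qed.

Lemma potU_equation (k : R) (z z2 : R -> CC) (x : R) :
  Rabs x < 1 -> z x <> RtoC 0 ->
  Cplus (Copp (z2 x)) (Cmult (potU k z z2 x) (z x)) = Cmult (RtoC (k ^ 2)) (z x).
Proof.
  intros Hx Hz. unfold potU. destruct (Rlt_dec (Rabs x) 1) as [_ | Hn]; [| contradiction].
  field. exact Hz.
Qed.

Lemma psi_ext_C1_ode_sol (k : R) (z z1 z2 : R -> CC) :
  C2_on_I11 z z1 z2 -> (forall x, I11 x -> z x <> RtoC 0) ->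
  z1 1 = Cmult (Cmult Ci (RtoC k)) (z 1) ->
  z1 (-1) = Cmult (Cmult Ci (RtoC (- k))) (z (-1)) ->
  C1_ode_sol (potU k z z2) k (psi_ext k z).
Proof.
  intros [Hz [Hz1 _]] Hnz H1 H2. exists (psi_ext k z1). split; [| split].
  - apply psi_ext_is_derive; assumption.
  - apply psi_ext_continuous. intros x Hx.
    apply is_derive_within_continuous with (z2 x), deriv_on_I11_within; assumption.
  - intros x Hx. assert (HxI : I11 x) by (apply Rabs_def2 in Hx; unfold I11; lra).
    exists (z2 x). split; [apply psi_ext_is_derive_interior; assumption |].
    rewrite psi_ext_I11 by exact HxI. apply potU_equation; auto.
Qed.

Lemma transfer_matrix_M22_eq_0 (U : R -> CC) (k : R) (M : mat2) (psi : R -> CC) (ap bm : CC) :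
  is_transfer_matrix U k M -> scat_sol U k psi (RtoC 0) bm ap (RtoC 0) -> bm <> RtoC 0 ->
  M22 M = RtoC 0.
Proof.
  intros [HM _] Hpsi Hbm. destruct (HM _ _ _ _ _ Hpsi) as [_ Hbp].
  rewrite Cmult_0_r, Cplus_0_l in Hbp.
  destruct (classic (M22 M = RtoC 0)) as [H | H]; [exact H | exfalso].
  exact (Cmult_neq_0 _ _ H Hbm (eq_sym Hbp)).
Qed.

Theorem mainTheorem1 (k0 : R) (z z1 z2 : R -> CC)
  (hk0 : k0 <> 0)
  (hz : C2_on_I11 z z1 z2)
  (hnz : forall x, -1 <= x <= 1 -> z x <> RtoC 0)
  (hbc1 : Cminus (z1 1) (Cmult (Cmult Ci (RtoC k0)) (z 1)) = RtoC 0)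
  (hbc2 : Cplus (z1 (-1)) (Cmult (Cmult Ci (RtoC k0)) (z (-1))) = RtoC 0) :
  (exists x, psi_ext k0 z x <> RtoC 0) /\
  C1_ode_sol (potU k0 z z2) k0 (psi_ext k0 z) /\
  (exists ap am : CC,
     (forall x, 1 <= x -> psi_ext k0 z x = Cmult ap (eix (k0 * Rabs x))) /\
     (forall x, x <= -1 -> psi_ext k0 z x = Cmult am (eix (k0 * Rabs x)))) /\
  (forall M, is_transfer_matrix (potU k0 z z2) k0 M -> M22 M = RtoC 0).
Proof.
  assert (bc1 : z1 1 = Cmult (Cmult Ci (RtoC k0)) (z 1)).
  { transitivity (Cplus (Cminus (z1 1) (Cmult (Cmult Ci (RtoC k0)) (z 1)))
                        (Cmult (Cmult Ci (RtoC k0)) (z 1))); [ring | rewrite hbc1; ring]. }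
  assert (bc2 : z1 (-1) = Cmult (Cmult Ci (RtoC (- k0))) (z (-1))).
  { transitivity (Cminus (Cplus (z1 (-1)) (Cmult (Cmult Ci (RtoC k0)) (z (-1))))
                         (Cmult (Cmult Ci (RtoC k0)) (z (-1))));
    [ring | rewrite hbc2, RtoC_opp; ring]. }
  assert (ode := psi_ext_C1_ode_sol k0 z z1 z2 hz hnz bc1 bc2).
  split; [| split; [exact ode | split]].
  - exists 0. rewrite psi_ext_I11 by (unfold I11; lra). apply hnz. lra.
  - exists (Cmult (z 1) (eix (- k0))), (Cmult (z (-1)) (eix (- k0))). split; intros x Hx.
    + rewrite psi_ext_outgoing_right, Rabs_pos_eq by lra. reflexivity.
    + rewrite psi_ext_outgoing_left, Rabs_left1 by lra. do 2 f_equal. ring.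
  - intros M HM.
    apply (transfer_matrix_M22_eq_0 _ _ M (psi_ext k0 z) (Cmult (z 1) (eix (- k0)))
             (Cmult (z (-1)) (eix (- k0))) HM).
    + split; [exact ode | split; intros x Hx].
      * rewrite psi_ext_outgoing_right by exact Hx. ring.
      * rewrite psi_ext_outgoing_left by exact Hx. ring.
    + apply Cmult_neq_0; [apply hnz; lra | apply eix_neq_0].
Qed.
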